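(* Let $\mathfrak{h}\subset\mathrm{Mat}_{2n+2}(\mathbb{C})$ be a Lie subalgebra (for the commutator bracket) of strictly upper-triangular matrices isomorphic to the Heisenberg Lie algebra $\mathfrak{h}_{2n+1}$, let $t$ span its center, let $\mathfrak{m}$ be the associative subalgebra of $\mathrm{Mat}_{2n+2}(\mathbb{C})$ generated by $\mathfrak{h}$, and let $\mathcal{A}=\mathbb{C}I_{2n+2}\oplus\mathfrak{m}$. If $t\cdot\mathfrak{m}=\mathfrak{m}\cdot t=0$, then $\mathfrak{m}^2\subset C(\mathcal{A})$, the center of $\mathcal{A}$.
   Context: The Heisenberg Lie algebra $\mathfrak{h}_{2n+1}$ is $\mathbb{W}\times\mathbb{C}$, $\mathbb{W}$ a $2n$-dimensional complex vector space with non-degenerate skew-symmetric form $\omega$, with bracket $[(w_1,t_1),(w_2,t_2)]=(0,\omega(w_1,w_2))$; its center $[\mathfrak{h}_{2n+1},\mathfrak{h}_{2n+1}]$ is one-dimensional. $\mathfrak{m}^2$ denotes the span of products of two elements of $\mathfrak{m}$. *)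

(* Complex numbers: C := R[i] (mathcomp-real-closed) for a
   realType R (i.e. R is the field of real numbers, up to isomorphism). *)
From HB Require Import structures.
From mathcomp Require Import all_boot all_order all_algebra.
From mathcomp Require Import complex reals.
Set Implicit Arguments. Unset Strict Implicit. Unset Printing Implicit Defensive.
Import Order.TTheory GRing.Theory Num.Theory.
Local Open Scope ring_scope.

Section Defs.
Variables (F : fieldType) (N : nat).
Local Notation M := 'M[F]_N.

Definition lie_subalgebra (h : {vspace M}) : Prop :=
  forall x y, x \in h -> y \in h -> x *m y - y *m x \in h.

Definition strictly_upper (h : {vspace M}) : Prop :=
  forall x, x \in h -> forall i j : 'I_N, (j <= i)%N -> x i j = 0.

Definition lie_center (h : {vspace M}) (x : M) : Prop :=
  x \in h /\ forall y, y \in h -> x *m y - y *m x = 0.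

Definition spans_center (h : {vspace M}) (t : M) : Prop :=
  t != 0 /\ lie_center h t /\ forall x, lie_center h x -> x \in <[t]>%VS.

Definition assoc_gen (h : {vspace M}) (x : M) : Prop :=
  forall V : {vspace M}, (h <= V)%VS ->
    (forall y z, y \in V -> z \in V -> y *m z \in V) -> x \in V.

Definition prod_span (S : M -> Prop) (x : M) : Prop :=
  forall V : {vspace M}, (forall y z, S y -> S z -> y *m z \in V) -> x \in V.

Definition unitize (S : M -> Prop) (a : M) : Prop :=
  exists c z, S z /\ a = c%:M + z.

Definition center_of (S : M -> Prop) (x : M) : Prop :=
  S x /\ forall a, S a -> x *m a = a *m x.

End Defs.

(* The Heisenberg Lie algebra h_{2n+1} = W x F with W = F^{2n} (row vectors)
   and non-degenerate skew form omega(w1,w2) = w1 Om w2^T, bracket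
   [(w1,t1),(w2,t2)] = (0, omega(w1,w2)).  [heisenberg_iso n h] says the
   Lie algebra h (bracket = commutator) is isomorphic to it: there is a
   linear bijection phi : W x F -> h preserving brackets. *)
Definition heisenberg_iso (F : fieldType) (N n : nat) (h : {vspace 'M[F]_N}) : Prop :=
  exists (Om : 'M[F]_(n.*2)) (phi : 'rV[F]_(n.*2) -> F -> 'M[F]_N),
    [/\ Om^T = - Om, Om \in unitmx &
       [/\ (forall a w1 t1 w2 t2, phi (a *: w1 + w2) (a * t1 + t2) = a *: phi w1 t1 + phi w2 t2),
        (forall w1 t1 w2 t2, phi w1 t1 = phi w2 t2 -> w1 = w2 /\ t1 = t2),
        (forall w t, phi w t \in h),
        (forall x, x \in h -> exists w t, x = phi w t) &
        (forall w1 t1 w2 t2,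
           phi 0 ((w1 *m Om *m w2^T) 0 0) = phi w1 t1 *m phi w2 t2 - phi w2 t2 *m phi w1 t1)]].

From HB Require Import structures.
From mathcomp Require Import all_boot all_order all_algebra.
From mathcomp Require Import complex reals.
From mathcomp Require Import zify.
From Stdlib Require Import Classical.
Import GRing.Theory.
Local Open Scope ring_scope.

(* In a Heisenberg algebra every commutator [a, b] of elements of
   h is central, hence a multiple of t, hence annihilates m on both sides.  By
   the Leibniz rule [u, v w] = [u, v] w + v [u, w], induction on the generation
   of m extends this to commutators of any two elements of m.  Then
   [y w, z] = y [w, z] + [y, z] w = 0 for y, w, z in m, so the products y w,
   and therefore their span m^2, commute with m and with the scalars; as m^2
   lies in m, it lies in the centre of A. *)

Section LinearPred.
Variables (K : fieldType) (vT : vectType K) (P : vT -> Prop).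
Hypotheses (P0 : P 0) (PD : forall a x y, P x -> P y -> P (a *: x + y)).

Lemma linear_pred_grow (V : {vspace vT}) :
  (forall x, x \in V -> P x) -> ~ (forall x, P x -> x \in V) ->
  exists2 V' : {vspace vT}, (\dim V < \dim V')%N & forall x, x \in V' -> P x.
Proof.
move=> VP /not_all_ex_not[x /(imply_to_and (P x))[Px xNV]].
exists (V + <[x]>)%VS; last first.
  move=> y /memv_addP[u uV [_ /vlineP[c ->] ->]].
  by rewrite addrC; apply: PD; [apply: Px | apply: VP].
rewrite ltn_neqAle (dimv_leqif_eq (addvSl _ _)) dimvS ?addvSl // andbT.
apply/eqP => EV; apply: xNV; rewrite EV.
by have := memv_add (mem0v V) (memv_line x); rewrite add0r.
Qed.

Lemma vspace_of_linear_pred : exists W : {vspace vT}, forall x, x \in W <-> P x.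
Proof.
suff grow k (V : {vspace vT}) : (\dim {:vT} - \dim V <= k)%N ->
    (forall x, x \in V -> P x) -> exists W : {vspace vT}, forall x, x \in W <-> P x.
  by apply: (grow _ 0%VS (leqnn _)) => x; rewrite memv0 => /eqP ->.
elim: k V => [|k IHk] V codimV VP.
all: have [PV|NPV] := classic (forall x, P x -> x \in V);
  first by exists V => x; split; [apply: VP | apply: PV].
all: have [V' ltVV' V'P] := linear_pred_grow _ VP NPV.
all: have := dimvS (subvf V').
  by move: codimV ltVV'; lia.
by move=> dimV'; apply: (IHk V') => //; move: codimV ltVV' dimV'; lia.
Qed.

End LinearPred.

Section AssocGen.
Variables (F : fieldType) (N : nat) (h : {vspace 'M[F]_N}).
Local Notation m := (assoc_gen h).
Local Notation "[ x , y ]" := (x *m y - y *m x).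

Lemma assoc_gen0 : m 0.
Proof. by move=> V _ _; apply: mem0v. Qed.

Lemma assoc_genD a {x y : 'M[F]_N} : m x -> m y -> m (a *: x + y).
Proof. by move=> mx my V hV mulV; rewrite memvD ?memvZ ?mx ?my. Qed.

Lemma memv_assoc_gen x : x \in h -> m x.
Proof. by move=> xh V /subvP hV _; apply: hV. Qed.

Lemma assoc_genM {x y : 'M[F]_N} : m x -> m y -> m (x *m y).
Proof. by move=> mx my V hV mulV; apply: mulV (mx V hV mulV) (my V hV mulV). Qed.

Lemma assoc_gen_ind (P : 'M[F]_N -> Prop) :
  P 0 -> (forall a x y, P x -> P y -> P (a *: x + y)) ->
  (forall x, x \in h -> P x) ->
  (forall x y, m x -> m y -> P x -> P y -> P (x *m y)) ->
  forall x, m x -> P x.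
Proof.
move=> P0 PD Ph PM.
have [V memV] := @vspace_of_linear_pred _ _ (fun x => m x /\ P x)
  (conj assoc_gen0 P0)
  (fun a x y '(conj mx Px) '(conj my Py) => conj (assoc_genD a mx my) (PD a x y Px Py)).
move=> x mx; suff /memV[] : x \in V by []; apply: mx.
  by apply/subvP=> y yh; apply/memV; split; [apply: memv_assoc_gen | apply: Ph].
move=> y z /memV[my Py] /memV[mz Pz]; apply/memV.
by split; [apply: assoc_genM | apply: PM].
Qed.

Lemma prod_span_ind (S P : 'M[F]_N -> Prop) :
  P 0 -> (forall a x y, P x -> P y -> P (a *: x + y)) ->
  (forall y z, S y -> S z -> P (y *m z)) ->
  forall x, prod_span S x -> P x.
Proof.
move=> P0 PD PM x Sx; have [V memV] := @vspace_of_linear_pred _ _ _ P0 PD.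
by apply/memV; apply: Sx => y z Sy Sz; apply/memV; apply: PM.
Qed.

Lemma prod_span_assoc_gen x : prod_span m x -> m x.
Proof.
move=> mmx V hV mulV; apply: mmx => y z my mz.
exact: mulV (my V hV mulV) (mz V hV mulV).
Qed.

Definition annihilates (S : 'M[F]_N -> Prop) (x : 'M[F]_N) :=
  forall w, S w -> x *m w = 0 /\ w *m x = 0.

Lemma annihilatesD S x y :
  annihilates S x -> annihilates S y -> annihilates S (x + y).
Proof.
move=> Sx Sy w /[dup] /Sx[xw wx] /Sy[yw wy].
by rewrite mulmxDl mulmxDr xw wx yw wy addr0.
Qed.

Lemma annihilatesZ S a x : annihilates S x -> annihilates S (a *: x).
Proof. by move=> Sx w /Sx[xw wx]; rewrite -scalemxAl -scalemxAr xw wx scaler0. Qed.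

Lemma annihilatesN S x : annihilates S x -> annihilates S (- x).
Proof. by move=> Sx w /Sx[xw wx]; rewrite mulNmx mulmxN xw wx oppr0. Qed.

Lemma annihilates_assoc_genMr x y : annihilates m x -> m y -> annihilates m (x *m y).
Proof.
move=> mx my w mw; have [xyw _] := mx _ (assoc_genM my mw); have [_ wx] := mx _ mw.
by rewrite -mulmxA xyw mulmxA wx mul0mx.
Qed.

Lemma annihilates_assoc_genMl x y : m x -> annihilates m y -> annihilates m (x *m y).
Proof.
move=> mx my w mw; have [yw _] := my _ mw; have [_ wxy] := my _ (assoc_genM mw mx).
by rewrite -mulmxA yw mulmx0 mulmxA wxy.
Qed.

Lemma bracket_annihilates_assoc_gen (A : 'M[F]_N -> Prop) :
  (forall a b, A a -> b \in h -> annihilates m [a, b]) ->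
  forall a v, A a -> m v -> annihilates m [a, v].
Proof.
move=> Ah a v Aa; move: v; apply: assoc_gen_ind.
- by rewrite mulmx0 mul0mx subrr => w _; rewrite mulmx0 mul0mx.
- move=> c x y; rewrite mulmxDr mulmxDl -scalemxAr -scalemxAl.
  by rewrite opprD addrACA -scalerBr => ax ay; apply/annihilatesD/ay/annihilatesZ.
- by move=> b; apply: Ah.
move=> x y mx my ax ay.
have -> : [a, x *m y] = [a, x] *m y + x *m [a, y].
  by rewrite mulmxBl mulmxBr !mulmxA addrA subrK.
by apply: annihilatesD; [apply: annihilates_assoc_genMr | apply: annihilates_assoc_genMl].
Qed.

Hypothesis bracket_h_annihilates :
  forall a b, a \in h -> b \in h -> annihilates m [a, b].

Lemma bracket_assoc_gen_annihilates {u v : 'M[F]_N} : m u -> m v -> annihilates m [u, v].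
Proof.
have hm := bracket_annihilates_assoc_gen (fun a => a \in h) bracket_h_annihilates.
apply: bracket_annihilates_assoc_gen => a b ma bh.
by rewrite -opprB; apply/annihilatesN/hm => //; apply: memv_assoc_gen.
Qed.

Lemma assoc_gen_mul_commute y w z :
  m y -> m w -> m z -> y *m w *m z = z *m (y *m w).
Proof.
move=> my mw mz; apply/eqP; rewrite -subr_eq0.
have -> : [y *m w, z] = y *m [w, z] + [y, z] *m w.
  by rewrite mulmxBl mulmxBr !mulmxA addrA subrK.
have [_ ywz] := bracket_assoc_gen_annihilates mw mz y my.
have [yzw _] := bracket_assoc_gen_annihilates my mz w mw.
by rewrite ywz yzw addr0.
Qed.

Lemma prod_span_center x : prod_span m x -> center_of (unitize m) x.
Proof.
move=> mmx; split.
  by exists 0, x; split; [apply: prod_span_assoc_gen | rewrite raddf0 add0r].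
move=> _ [c [z [mz ->]]].
rewrite mulmxDr mulmxDl mul_mx_scalar mul_scalar_mx; congr (_ + _).
move: x mmx; apply: prod_span_ind => [|a x y xz yz|y w my mw].
- by rewrite mul0mx mulmx0.
- by rewrite mulmxDl mulmxDr -scalemxAl -scalemxAr xz yz.
by rewrite assoc_gen_mul_commute.
Qed.

End AssocGen.

Lemma heisenberg_bracket_center {F : fieldType} {N n : nat} {h : {vspace 'M[F]_N}} {a b} :
  heisenberg_iso n h -> a \in h -> b \in h -> lie_center h (a *m b - b *m a).
Proof.
move=> [Om [phi [_ _ [phiD _ phi_h phi_onto phi_bracket]]]] ah bh.
have phi00 : phi 0 0 = 0.
  by have := phiD (-1) 0 0 0 0; rewrite scaler0 mulr0 !addr0 scaleN1r addNr.
have [w1 [t1 ->]] := phi_onto a ah; have [w2 [t2 ->]] := phi_onto b bh.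
rewrite -phi_bracket; split=> [|_ /phi_onto[w3 [t3 ->]]]; first exact: phi_h.
by rewrite -phi_bracket !mul0mx mxE phi00.
Qed.

Theorem lemma3p3 (R : realType) (n : nat)
  (h : {vspace 'M[R[i]]_(n.*2.+2)}) (t : 'M[R[i]]_(n.*2.+2)) :
  lie_subalgebra h ->
  strictly_upper h ->
  heisenberg_iso n h ->
  spans_center h t ->
  (forall x, assoc_gen h x -> t *m x = 0 /\ x *m t = 0) ->
  forall x, prod_span (assoc_gen h) x ->
    center_of (unitize (assoc_gen h)) x.
Proof.
move=> _ _ hH [_ [_ t_spans]] t_ann.
apply: prod_span_center => a b ah bh.
have /vlineP[k ->] := t_spans _ (heisenberg_bracket_center hH ah bh).
by apply: annihilatesZ => w /t_ann.
Qed.
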